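(* Let $N\ge 2$ be an integer, let $T\ge 0$ be a real number, and let $\hat{\boldsymbol{A}}=(\hat A_1,\dots,\hat A_N)$, $\hat{\boldsymbol{B}}=(\hat B_1,\dots,\hat B_N)$ be vectors with $\hat A_i\ge 0$, $\hat B_i\ge 0$ for all $i$ and $\sum_{i=1}^N\hat A_i=\sum_{i=1}^N\hat B_i=T$. Put $\hat S_i=\hat A_i+\hat B_i$. Suppose $\hat S_i\le T$ for all $i=1,\dots,N$. Then $\hat L_{\min}=0$; that is, there exists an $N\times N$ real matrix $\hat{\boldsymbol{P}}=(\hat p_{i,j})$ with $\hat p_{i,i}=0$ for all $i$, $\hat p_{i,j}\ge 0$ for all $i,j$, $\sum_{i,j}\hat p_{i,j}=T$, such that $$\hat L=\sum_{i=1}^N\Big(\sum_{j=1}^N\hat p_{i,j}-\hat A_i\Big)^2+\sum_{j=1}^N\Big(\sum_{i=1}^N\hat p_{i,j}-\hat B_j\Big)^2=0,$$ i.e. $\sum_j\hat p_{i,j}=\hat A_i$ for all $i$ and $\sum_i\hat p_{i,j}=\hat B_j$ for all $j$.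
   Context: Here $\hat L_{\min}$ denotes the minimum of $\hat L$ over all $N\times N$ matrices $\hat{\boldsymbol P}$ with zero diagonal, nonnegative entries and total entry sum $T$. $T$ is called the total preference and $\hat S_i$ the popularity of arm $i$. *)

From mathcomp Require Import all_boot all_order all_algebra.
From mathcomp Require Import reals.
Set Implicit Arguments. Unset Strict Implicit. Unset Printing Implicit Defensive.
Import Order.TTheory GRing.Theory Num.Theory.
Local Open Scope ring_scope.

Definition Lhat (R : realType) (N : nat) (A B : 'I_N -> R) (P : 'M[R]_N) : R :=
  \sum_(i < N) (\sum_(j < N) P i j - A i) ^+ 2
  + \sum_(j < N) (\sum_(i < N) P i j - B j) ^+ 2.

Definition admissible (R : realType) (N : nat) (T : R) (P : 'M[R]_N) : Prop :=
  (forall i, P i i = 0) /\ (forall i j, 0 <= P i j) /\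
  \sum_(i < N) \sum_(j < N) P i j = T.

(* Lay A out as consecutive intervals I_i = [a_i, a_(i+1)] of [0, T], a being the prefix
   sums of A, and B likewise as intervals J_j = [b_j, b_(j+1)], rotated by s on the circle
   R/TZ.  The arc lengths p_ij = |I_i ∩ (J_j + s)|, which for 0 <= s <= T unroll to
   |I_i ∩ (J_j + s)| + |I_i ∩ (J_j + s - T)| on the line, have row sums A and column
   sums B.  The diagonal vanishes as soon as I_i and J_i + s lie on complementary arcs,
   i.e. a_(i+1) - b_i <= s <= T + a_i - b_(i+1) for every i; such an s exists because
   a_(i+1) - b_i <= T + a_k - b_(k+1) for all i, k: for i = k this is A_i + B_i <= T,
   and otherwise it follows from the monotonicity of the prefix sums. *)

From mathcomp Require Import all_boot all_order all_algebra.
From mathcomp Require Import reals.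
From mathcomp Require Import lra.
Set Implicit Arguments.
Unset Strict Implicit.
Unset Printing Implicit Defensive.

Import Order.TTheory GRing.Theory Num.Theory.
Local Open Scope ring_scope.

Section Overlap.
Variable R : realDomainType.
Implicit Types a b c d m t x : R.

Definition clip c d x := Num.min d (Num.max c x).

(* The length of [a, b] ∩ [c, d] when a <= b and c <= d, written so that it
   telescopes over a subdivision of [a, b]. *)
Definition overlap a b c d := clip c d b - clip c d a.

Ltac by_cases := rewrite /overlap /clip; repeat (case: leP => ?; try lra).

Lemma clip_le c d x y : x <= y -> clip c d x <= clip c d y.
Proof. by move=> xy; apply: le_min2 => //; apply: le_max2. Qed.

Lemma clip_shift c d x t : clip (c - t) (d - t) (x - t) = clip c d x - t.
Proof. by by_cases. Qed.

Lemma overlap_ge0 a b c d : a <= b -> 0 <= overlap a b c d.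
Proof. by move=> ab; rewrite subr_ge0 clip_le. Qed.

Lemma overlapC a b c d : a <= b -> c <= d -> overlap a b c d = overlap c d a b.
Proof. by move=> ? ?; by_cases. Qed.

Lemma overlap_shift a b c d t :
  overlap (a - t) (b - t) (c - t) (d - t) = overlap a b c d.
Proof. rewrite /overlap !clip_shift; lra. Qed.

Lemma overlap_catl a m b c d : overlap a m c d + overlap m b c d = overlap a b c d.
Proof. rewrite /overlap; lra. Qed.

Lemma overlap_catr a b c m d : c <= m -> m <= d ->
  overlap a b c m + overlap a b m d = overlap a b c d.
Proof.
move=> cm md; have clip_cat x : clip c m x + clip m d x = clip c d x + m by by_cases.
by rewrite /overlap; move: (clip_cat a) (clip_cat b); lra.
Qed.

Lemma overlap_subset a b c d : c <= a -> a <= b -> b <= d -> overlap a b c d = b - a.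
Proof. by move=> ? ? ?; by_cases. Qed.

Lemma overlap_eq0 a b c d : a <= b -> c <= d -> b <= c \/ d <= a -> overlap a b c d = 0.
Proof. by move=> ? ? [] ?; by_cases. Qed.

Lemma sum_overlapl (c : nat -> R) n x y :
  \sum_(k < n) overlap (c k) (c k.+1) x y = overlap (c 0) (c n) x y.
Proof.
by rewrite -(big_mkord xpredT (fun k => clip x y (c k.+1) - clip x y (c k))) telescope_sumr.
Qed.

Lemma sum_overlapr (c : nat -> R) n x y :
  {homo c : k l / (k <= l)%N >-> k <= l} -> x <= y ->
  \sum_(k < n) overlap x y (c k) (c k.+1) = overlap x y (c 0) (c n).
Proof.
move=> c_homo xy; rewrite overlapC ?c_homo // -sum_overlapl.
by apply: eq_bigr => k _; rewrite overlapC ?c_homo.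
Qed.

End Overlap.

Section PrefixSums.
Variables (R : numDomainType) (N : nat) (A : 'I_N -> R).

Definition psum n := \sum_(k < N | (k < n)%N) A k.

Lemma psum0 : psum 0 = 0.
Proof. by rewrite /psum big_pred0. Qed.

Lemma psum_total : psum N = \sum_(k < N) A k.
Proof. by apply: eq_bigl => k; rewrite ltn_ord. Qed.

Lemma psumS (i : 'I_N) : psum i.+1 = psum i + A i.
Proof.
rewrite /psum (bigD1 i) ?ltnSn //= addrC; congr (_ + _).
by apply: eq_bigl => k; rewrite ltnS ltn_neqAle -val_eqE andbC.
Qed.

Hypothesis A_ge0 : forall i, 0 <= A i.

Lemma psum_ge0 n : 0 <= psum n.
Proof. exact: sumr_ge0. Qed.

Lemma psum_homo : {homo psum : m n / (m <= n)%N >-> m <= n}.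
Proof.
move=> m n mn; rewrite /psum [leLHS]big_mkcond [leRHS]big_mkcond /=.
apply: ler_sum => k _; case: ifP => [km|_]; last by case: ifP.
by rewrite (leq_trans km mn).
Qed.

Lemma psum_le_sum n : psum n <= \sum_(k < N) A k.
Proof. by rewrite /psum big_mkcond; apply: ler_sum => k _; case: ifP. Qed.

End PrefixSums.

Section CircularCoupling.
Variables (R : realDomainType) (N : nat) (T : R) (A B : 'I_N -> R).
Hypotheses (A_ge0 : forall i, 0 <= A i) (B_ge0 : forall i, 0 <= B i).
Hypotheses (sumA : \sum_(i < N) A i = T) (sumB : \sum_(i < N) B i = T).
Hypothesis AB_le : forall i, A i + B i <= T.

Local Notation a := (psum A).
Local Notation b := (psum B).

Let a_ge0 n : 0 <= a n. Proof. exact: psum_ge0. Qed.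
Let b_ge0 n : 0 <= b n. Proof. exact: psum_ge0. Qed.
Let a_leT n : a n <= T. Proof. by rewrite -sumA psum_le_sum. Qed.
Let b_leT n : b n <= T. Proof. by rewrite -sumB psum_le_sum. Qed.

Lemma psum_cross_le (i k : 'I_N) : a i.+1 - b i <= T + a k - b k.+1.
Proof.
case: (ltngtP i k) => [ik | ki | /val_inj ->].
- by have := psum_homo A_ge0 ik; have := b_ge0 i; have := b_leT k.+1; lra.
- by have := psum_homo B_ge0 ki; have := a_ge0 k; have := a_leT i.+1; lra.
- by rewrite !psumS; have := AB_le k; lra.
Qed.

Definition shift := \big[Num.max/0]_(i < N) (a i.+1 - b i).

Lemma shift_ge0 : 0 <= shift.
Proof. exact: bigmax_ge_id. Qed.

Lemma le_shift (i : 'I_N) : a i.+1 - b i <= shift.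
Proof. exact: le_bigmax. Qed.

Lemma shift_le (k : 'I_N) : shift <= T + a k - b k.+1.
Proof.
apply/bigmax_leP; split=> [|i _]; last exact: psum_cross_le.
by have := a_ge0 k; have := b_leT k.+1; lra.
Qed.

Lemma shift_leT : shift <= T.
Proof.
apply/bigmax_leP; split=> [|i _]; first by rewrite -sumA sumr_ge0.
by have := a_leT i.+1; have := b_ge0 i; lra.
Qed.

Definition coupling : 'M[R]_N := \matrix_(i, j)
  (overlap (a i) (a i.+1) (b j + shift) (b j.+1 + shift)
   + overlap (a i) (a i.+1) (b j + (shift - T)) (b j.+1 + (shift - T))).

Let a_step (i : 'I_N) : a i <= a i.+1. Proof. exact: psum_homo. Qed.
Let b_step (j : 'I_N) : b j <= b j.+1. Proof. exact: psum_homo. Qed.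

Let b_shift_homo t : {homo (fun n => b n + t) : m n / (m <= n)%N >-> m <= n}.
Proof. by move=> m n /(psum_homo B_ge0); rewrite lerD2r. Qed.

Lemma coupling_ge0 i j : 0 <= coupling i j.
Proof. by rewrite mxE addr_ge0 ?overlap_ge0. Qed.

Lemma coupling_diag i : coupling i i = 0.
Proof.
have lo := le_shift i; have up := shift_le i.
have ai := a_step i; have bi := b_step i.
by rewrite mxE !overlap_eq0 ?addr0; lra.
Qed.

Lemma coupling_row i : \sum_(j < N) coupling i j = A i.
Proof.
under eq_bigr do rewrite mxE.
rewrite big_split /= (sum_overlapr _ (b_shift_homo shift) (a_step i)).
rewrite (sum_overlapr _ (b_shift_homo (shift - T)) (a_step i)) /=.
rewrite (psum0 B) (psum_total B) sumB !add0r subrKC addrC.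
have s0 := shift_ge0; have sT := shift_leT.
have ai0 := a_ge0 i; have aiT := a_leT i.+1; have ai := a_step i.
have aS := psumS A i.
by rewrite overlap_catr ?overlap_subset; lra.
Qed.

Lemma coupling_col j : \sum_(i < N) coupling i j = B j.
Proof.
under eq_bigr do rewrite mxE.
rewrite big_split /= !(@sum_overlapl _ a) (psum0 A) (psum_total A) sumA.
set x := b j + shift; set y := b j.+1 + shift.
have -> : overlap 0 T (b j + (shift - T)) (b j.+1 + (shift - T)) = overlap T (T + T) x y.
  by rewrite -(overlap_shift T (T + T) x y T) subrr addrK !addrA.
have s0 := shift_ge0; have sT := shift_leT.
have bj0 := b_ge0 j; have bjT := b_leT j.+1; have bj := b_step j.
have bS := psumS B j.
by rewrite overlap_catl overlapC ?overlap_subset /x /y; lra.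
Qed.

Lemma exists_offdiag_coupling : exists P : 'M[R]_N,
  [/\ forall i, P i i = 0, forall i j, 0 <= P i j,
      forall i, \sum_(j < N) P i j = A i & forall j, \sum_(i < N) P i j = B j].
Proof.
exists coupling; split; [exact: coupling_diag | exact: coupling_ge0 |
  exact: coupling_row | exact: coupling_col].
Qed.

End CircularCoupling.

Theorem lemma2p1 (R : realType) (N : nat) (T : R) (A B : 'I_N -> R) :
  (2 <= N)%N -> 0 <= T ->
  (forall i, 0 <= A i) -> (forall i, 0 <= B i) ->
  \sum_(i < N) A i = T -> \sum_(i < N) B i = T ->
  (forall i, A i + B i <= T) ->
  exists P : 'M[R]_N, admissible T P /\ Lhat A B P = 0 /\
    (forall i, \sum_(j < N) P i j = A i) /\
    (forall j, \sum_(i < N) P i j = B j).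
Proof.
move=> _ _ A_ge0 B_ge0 sumA sumB AB_le.
have [P [diag P_ge0 row col]] := exists_offdiag_coupling A_ge0 B_ge0 sumA sumB AB_le.
exists P; split; [|split; [|split]] => //.
- by split; [|split] => //; rewrite (eq_bigr _ (fun i _ => row i)).
- by rewrite /Lhat !big1 ?addr0 // => i _; rewrite (row, col) subrr expr0n.
Qed.
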